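(* Let $K=\mathbb{C}(t)=\mathbb{C}(\mathbb{P}^1)$. For every finite set $S$ of points of $\mathbb{P}^1(\mathbb{C})$, strong approximation outside $S$ fails for the $K$-variety $\mathbb{G}_{m,K}$.
   Context: Places of $K$ are identified with the points $P\in\mathbb{P}^1(\mathbb{C})$; $K_P$ is the completion at $P$, with its valuation topology. $\mathbb{A}_K$ is the ring of adèles of $K$ and $\mathbb{A}_K^S$ the adèles outside $S$. A $K$-variety $X$ satisfies strong approximation outside $S$ if the diagonal image of $X(K)$ is dense in the projection of $X(\mathbb{A}_K)$ to $X(\mathbb{A}_K^S)$; for $X=\mathbb{G}_{m,K}$, $X(K)=K^*$ and $X(\mathbb{A}_K^S)$ is the group of idèles outside $S$. *)

(* K = C(t) with C = R[i] (R : realType, so C is the field of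
   complex numbers), places = points of P^1(C) = option C (None = infinity),
   completions K_P = formal Laurent series C((t-a)) (resp. C((1/t))). *)
From HB Require Import structures.
From mathcomp Require Import all_boot all_order all_algebra.
From mathcomp Require Import all_reals complex.
Set Implicit Arguments. Unset Strict Implicit. Unset Printing Implicit Defensive.
Import Order.TTheory GRing.Theory Num.Theory.
Local Open Scope ring_scope.

Section Defs.
Variable R : realType.
Local Notation C := (R[i]).
Local Notation "x %:F" := (@FracField.tofrac _ x).

Definition Kfield := {fraction {poly C}}.

Definition place := option C.

(* Laurent series: coefficient functions Z -> C with support bounded below;
   L n is the coefficient of pi^n, pi the uniformizer (t - a), resp. 1/t *)
Definition laurent := int -> C.
Definition lbounded (L : laurent) := exists N : int, forall n, n < N -> L n = 0.
Definition lnonzero (L : laurent) := exists n, L n != 0.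
Definition ord_ge (L : laurent) (m : int) := forall n, n < m -> L n = 0.
Definition lunit (L : laurent) := ord_ge L 0 /\ L 0 != 0.
Definition lsub (L M : laurent) : laurent := fun n => L n - M n.

(* L is the image of f in the completion K_P *)
Definition expands (P : place) (f : Kfield) (L : laurent) :=
  lbounded L /\
  exists p q : {poly C}, q != 0 /\ f = p%:F / q%:F /\
  match P with
  | Some a =>
      let Pa := p \Po ('X + a%:P) in let Qa := q \Po ('X + a%:P) in
      forall n : int, \sum_(i < size Qa) Qa`_i * L (n - i%:Z)
                      = (if (0 <= n) then Pa`_(absz n) else 0)
  | None =>
      forall n : int, \sum_(i < size q) q`_i * L (n + i%:Z)
                      = (if (n <= 0) then p`_(absz n) else 0)
  end.

(* idèles outside S (coordinates at places of S are irrelevant) *)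
Definition is_idele (S : seq place) (x : place -> laurent) :=
  (forall P, P \notin S -> lbounded (x P) /\ lnonzero (x P)) /\
  exists T : seq place, forall P, P \notin S -> P \notin T -> lunit (x P).

(* basic open set of the restricted product topology on idèles outside S:
   prod_{P in T} {y_P : v(y_P - x_P) >= m}  x  prod_{P notin S, T} O_P^*   *)
Definition basic_nbhd (S T : seq place) (x : place -> laurent) (m : int)
    (y : place -> laurent) :=
  is_idele S y /\
  forall P, P \notin S ->
    (P \in T -> ord_ge (lsub (y P) (x P)) m) /\ (P \notin T -> lunit (y P)).

Definition idele_open (S : seq place) (U : (place -> laurent) -> Prop) :=
  forall x, U x -> is_idele S x /\
    exists (T : seq place) (m : int),
      (forall P, P \notin S -> P \notin T -> lunit (x P)) /\
      (forall y, basic_nbhd S T x m y -> U y).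

(* strong approximation outside S for G_m: K^* is dense in the projection
   of G_m(A_K) (= all idèles) to G_m(A_K^S) (= idèles outside S). *)
Definition strong_approx_Gm (S : seq place) :=
  forall U, idele_open S U ->
    (exists x, is_idele [::] x /\ U x) ->
    exists f : Kfield, f != 0 /\
      exists y, U y /\ forall P, P \notin S -> expands P f (y P).

End Defs.

From HB Require Import structures.
From mathcomp Require Import all_boot all_order all_algebra.
From mathcomp Require Import all_reals complex.
From mathcomp Require Import zify ring.
Set Implicit Arguments. Unset Strict Implicit. Unset Printing Implicit Defensive.
Import Order.TTheory GRing.Theory Num.Theory.
Local Open Scope ring_scope.

(* Pick a finite point [a] outside [S], let [N = |S| + 2], and consider the
   neighbourhood of the idele equal to [1 + pi_a ^ N] at [a] and to [1]
   elsewhere, of precision [N + 1] at [a].  A principal idele [f] in it is a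
   unit at every finite place outside [S], so its zeros and poles lie in [S]:
   with [D = prod_(z in S finite) (t - z)], the rational function [D f' / f]
   is a polynomial of degree at most [|S|].  But [f = 1 + pi_a ^ N] modulo
   [pi_a ^ (N + 1)], so [f' / f] vanishes to order exactly [N - 1 = |S| + 1]
   at [a], which a nonzero polynomial of degree [|S|] cannot do. *)
Section PolyField.
Variable F : fieldType.
Implicit Types p q : {poly F}.

Lemma dvdp_XnP n p : reflect (forall i, (i < n)%N -> p`_i = 0) ('X^n %| p).
Proof.
apply: (iffP idP) => [/dvdpP [r ->] i lt_in | p_lo].
  by rewrite coefMXn lt_in.
rewrite -(poly_take_drop n p).
have -> : take_poly n p = 0.
  by apply/polyP => i; rewrite coef_take_poly coef0; case: ifP => // /p_lo.
by rewrite add0r dvdp_mulIr.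
Qed.

Lemma coef_mul_truncation q (L : int -> F) (n M : nat) :
  (forall k : int, k < 0 -> L k = 0) -> (n < M)%N ->
  \sum_(i < size q) q`_i * L (n%:Z - i%:Z) = (q * \poly_(i < M) L i%:Z)`_n.
Proof.
move=> L_neg lt_nM; rewrite coefM.
rewrite (big_ord_widen (n.+1 + size q) (fun i => q`_i * L (n%:Z - i%:Z)));
  last by rewrite leq_addl.
rewrite (big_ord_widen (n.+1 + size q)
  (fun i => q`_i * (\poly_(j < M) L j%:Z)`_(n - i))); last by rewrite leq_addr.
rewrite big_mkcond [RHS]big_mkcond /=; apply: eq_bigr => i _.
case: (ltnP i (size q)) => iq; case: (ltnP i n.+1) => iN //=.
- by rewrite coef_poly (leq_ltn_trans (leq_subr _ _) lt_nM) subzn.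
- by rewrite L_neg ?mulr0 // subr_lt0 ltz_nat.
- by rewrite nth_default ?mul0r.
Qed.

(* If [L] is the Laurent expansion at [0] of [p1 / q1 = p0 / q0], then the
   truncation of [L] agrees with [p0 / q0] to any order [m]; the extra
   [size q1] terms absorb the possible zero of [q1] at [0]. *)
Lemma dvdp_Xn_truncation p0 q0 p1 q1 (L : int -> F) (m : nat) :
  q1 != 0 -> p0 * q1 = p1 * q0 -> (forall n : int, n < 0 -> L n = 0) ->
  (forall n : int, \sum_(i < size q1) q1`_i * L (n - i%:Z)
                   = (if 0 <= n then p1`_(absz n) else 0)) ->
  'X^m %| q0 * \poly_(i < m + size q1) L i%:Z - p0.
Proof.
move=> q1_neq0 cross L_neg expL.
set M := (m + size q1)%N; set LM := \poly_(i < M) L i%:Z.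
have dvd_q1 : 'X^M %| q1 * LM - p1.
  by apply/dvdp_XnP => i iM; rewrite coefB -coef_mul_truncation // expL subrr.
have cross_trunc : q1 * (q0 * LM - p0) = q0 * (q1 * LM - p1).
  by rewrite !mulrBr !mulrA (mulrC q1 q0) (mulrC q1 p0) cross (mulrC p1).
have [k [r r0_neq0 def_q1]] := multiplicity_XsubC q1 0.
rewrite q1_neq0 subr0 /= in r0_neq0 def_q1.
have r_neq0 : r != 0 by apply: contraNneq r0_neq0 => ->; rewrite root0.
have lt_kq1 : (k < size q1)%N.
  rewrite def_q1 size_mul ?expf_neq0 ?polyX_eq0 // size_polyXn addnS /=.
  by rewrite -{1}(add0n k) ltn_add2r size_poly_gt0.
have : 'X^M %| r * (q0 * LM - p0) * 'X^k.
  by rewrite mulrAC -def_q1 cross_trunc dvdp_mull.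
rewrite -(subnKC (ltnW (leq_trans lt_kq1 (leq_addl m _)) : (k <= M)%N)).
rewrite exprD [X in _ %| X]mulrC dvdp_mul2l ?expf_neq0 ?polyX_eq0 //.
rewrite Gauss_dvdpr; last by apply: coprimep_expl; rewrite coprimep_sym coprimepX.
by apply: dvdp_trans; apply: dvdp_exp2l; rewrite /M -addnBA ?leq_addr // ltnW.
Qed.

(* [q ^+ 2 * (p / q)'], so that [wronskian p q / (p * q)] is the logarithmic
   derivative of [p / q]. *)
Definition wronskian p q := p^`() * q - p * q^`().

Lemma dvdp_wronskian_one_plus_Xn p q (N : nat) :
  'X^(N.+1) %| q * (1 + 'X^N) - p ->
  'X^N %| wronskian p q - q ^+ 2 * 'X^(N.-1) *+ N.
Proof.
move=> /dvdpP [e def_e]; set E := e * 'X^(N.+1) in def_e.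
have def_p : p = q * (1 + 'X^N) - E by rewrite -def_e; ring.
have dvdE : 'X^N %| E by rewrite /E exprS mulrA dvdp_mulIr.
have dvdE' : 'X^N %| E^`().
  rewrite /E derivM derivXn /= exprS mulrA -mulr_natl mulrA.
  by rewrite dvdp_add ?dvdp_mulIr.
have -> : wronskian p q - q ^+ 2 * 'X^(N.-1) *+ N = E * q^`() - E^`() * q.
  by rewrite /wronskian def_p derivB derivM derivD derivC derivXn; ring.
by apply: dvdp_sub; apply: dvdp_mulr.
Qed.

Lemma wronskian_comp_XaddC p q c :
  wronskian (p \Po ('X + c%:P)) (q \Po ('X + c%:P))
  = wronskian p q \Po ('X + c%:P).
Proof.
have deriv_shift r : (r \Po ('X + c%:P))^`() = r^`() \Po ('X + c%:P).
  by rewrite deriv_comp derivD derivX derivC addr0 mulr1.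
by rewrite /wronskian !deriv_shift -!comp_polyM -comp_polyB.
Qed.

Lemma coprime_fraction_repr p q : p != 0 -> q != 0 ->
  exists p0 q0, [/\ coprimep p0 q0, p0 != 0, q0 != 0 &
    forall p1 q1, q1 != 0 -> tofrac p1 / tofrac q1 = tofrac p / tofrac q ->
      p0 * q1 = p1 * q0].
Proof.
move=> p_neq0 q_neq0; set g := gcdp p q.
have g_neq0 : g != 0 by rewrite gcdp_eq0 negb_and p_neq0.
have def_p : p = p %/ g * g by rewrite divpK // dvdp_gcdl.
have def_q : q = q %/ g * g by rewrite divpK // dvdp_gcdr.
exists (p %/ g), (q %/ g); split.
- by apply: coprimep_div_gcd; rewrite p_neq0.
- by apply: contra_neq p_neq0 => p0; rewrite def_p p0 mul0r.
- by apply: contra_neq q_neq0 => q0; rewrite def_q q0 mul0r.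
move=> p1 q1 q1_neq0 /eqP; rewrite eqr_div ?tofrac_eq0 // -!tofracM tofrac_eq.
move=> /eqP cross; apply: (mulIf g_neq0).
by rewrite mulrAC -def_p -mulrA -def_q cross mulrC.
Qed.
Lemma dvdp_prod_XsubC_deriv (D : {poly F}) (rs : seq F) :
  (forall z, z \in rs -> root D z) ->
  \prod_(z <- rs) ('X - z%:P) %| D * (\prod_(z <- rs) ('X - z%:P))^`().
Proof.
elim: rs => [|z rs IH] rs_roots; first by rewrite big_nil dvd1p.
rewrite big_cons derivM derivXsubC mul1r mulrDr; apply: dvdp_add.
  by apply: dvdp_mul => //; rewrite -root_factor_theorem rs_roots ?mem_head.
rewrite mulrCA dvdp_mul2l ?polyXsubC_eq0 //.
by apply: IH => y y_rs; rewrite rs_roots // in_cons y_rs orbT.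
Qed.

Lemma size_mul_deriv_quotient (D p u : {poly F}) : p != 0 ->
  D * p^`() = u * p -> (size u <= (size D).-1)%N.
Proof.
move=> p_neq0 def_u; have [-> | u_neq0] := eqVneq u 0.
  by rewrite size_poly0.
have up_neq0 : u * p != 0 by rewrite mulf_neq0.
have D_neq0 : D != 0 by apply: contra_neq up_neq0 => D0; rewrite -def_u D0 mul0r.
have p'_neq0 : p^`() != 0.
  by apply: contra_neq up_neq0 => p'0; rewrite -def_u p'0 mulr0.
have := size_mul D_neq0 p'_neq0; rewrite def_u size_mul // -!subn1.
have := lt_size_deriv p_neq0; have : (0 < size p^`())%N by rewrite size_poly_gt0.
move: (size u) (size p) (size D) (size p^`()) => *; lia.
Qed.
End PolyField.

(* The Wronskian vanishes to order exactly [N - 1] at [0], where [p * q] does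
   not vanish, so the nonzero [r] vanishes there to order at least [N - 1]. *)
Lemma size_wronskian_quotient (F : numFieldType) (D p q r : {poly F}) (N : nat) :
  (0 < N)%N -> D != 0 -> D * wronskian p q = p * q * r -> q`_0 != 0 ->
  'X^(N.+1) %| q * (1 + 'X^N) - p -> (N <= size r)%N.
Proof.
move=> N_gt0 D_neq0 def_r q0_neq0 near_one.
have N_neq0 : (N == 0)%N = false by rewrite eqn0Ngt N_gt0.
have lt_predN : (N.-1 < N)%N by rewrite ltn_predL.
have coef_lo := dvdp_XnP _ _ (dvdp_wronskian_one_plus_Xn near_one).
have coefW i : (i < N)%N ->
    (wronskian p q)`_i = if i == N.-1 then q`_0 ^+ 2 *+ N else 0.
  move=> lt_iN; move/eqP: (coef_lo i lt_iN).
  rewrite coefB coefMn coefMXn subr_eq0 => /eqP ->.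
  case: (ltngtP i N.-1) => [_ | lt_Ni | ->];
    rewrite ?mul0rn ?subnn ?coef0M ?expr2 //.
  by move: lt_Ni; rewrite -ltnS prednK // ltnNge lt_iN.
have W_neq0 : wronskian p q != 0.
  apply: contraTneq q0_neq0 => W0; move: (coefW N.-1 lt_predN).
  rewrite W0 coef0 eqxx => /esym/eqP; rewrite mulrn_eq0 N_neq0.
  by rewrite expf_eq0 /= => ->.
have dvd_W : 'X^(N.-1) %| wronskian p q.
  apply/dvdp_XnP => i lt_iN; rewrite coefW ?(ltn_trans lt_iN) //.
  by rewrite ltn_eqF.
have p0_q0 : p`_0 = q`_0.
  move/eqP: (dvdp_XnP _ _ near_one 0%N isT).
  rewrite coefB coef0M coefD coef1 coefXn (eq_sym 0%N N) N_neq0 addr0 mulr1.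
  by rewrite subr_eq0 => /eqP.
have coprime_X : coprimep 'X^(N.-1) (p * q).
  apply: coprimep_expl; rewrite coprimep_sym coprimepX.
  by rewrite /root hornerM !horner_coef0 p0_q0 mulf_neq0.
have r_neq0 : r != 0.
  by apply: contra_neq (mulf_neq0 D_neq0 W_neq0) => r0; rewrite def_r r0 mulr0.
have : 'X^(N.-1) %| r by rewrite -(Gauss_dvdpr _ coprime_X) -def_r dvdp_mull.
by move/(dvdp_leq r_neq0); rewrite size_polyXn prednK.
Qed.

(* Over an algebraically closed field, [p' / p] has poles only at the roots
   of [p], so clearing them by [D] leaves a polynomial. *)
Lemma dvdp_mul_deriv (F : closedFieldType) (D p : {poly F}) : p != 0 ->
  (forall z, root p z -> root D z) -> p %| D * p^`().
Proof.
move=> p_neq0 roots_p; have [rs def_p] := closed_field_poly_normal p.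
have lc_neq0 : lead_coef p != 0 by rewrite lead_coef_eq0.
rewrite def_p derivZ -scalerAr (eqp_dvdl _ (eqp_scale _ lc_neq0)).
rewrite (eqp_dvdr _ (eqp_scale _ lc_neq0)).
apply: dvdp_prod_XsubC_deriv => z z_rs; apply: roots_p.
by rewrite def_p rootZ // root_prod_XsubC.
Qed.

Lemma wronskian_mul_quotient (F : closedFieldType) (D p q : {poly F}) :
  p != 0 -> q != 0 -> (forall z, root p z || root q z -> root D z) ->
  exists2 w, D * wronskian p q = p * q * w & (size w <= (size D).-1)%N.
Proof.
move=> p_neq0 q_neq0 roots_pq.
have [u def_u] : exists u, D * p^`() = u * p.
  by apply/dvdpP/dvdp_mul_deriv => // z pz; rewrite roots_pq ?pz.
have [v def_v] : exists v, D * q^`() = v * q.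
  by apply/dvdpP/dvdp_mul_deriv => // z qz; rewrite roots_pq ?qz ?orbT.
exists (u - v).
  rewrite /wronskian mulrBr !mulrA def_u -(mulrA D p) (mulrCA D p) def_v.
  by ring.
apply: leq_trans (size_polyD _ _) _; rewrite size_polyN geq_max.
by rewrite (size_mul_deriv_quotient p_neq0 def_u)
  (size_mul_deriv_quotient q_neq0 def_v).
Qed.

Section Ideles.
Variable R : realType.
Local Notation C := R[i].
Implicit Types (S T : seq (place R)) (x y : place R -> laurent R).

Definition finite_places_poly S : {poly C} := \prod_(z <- pmap id S) ('X - z%:P).

Lemma root_finite_places_poly S z :
  root (finite_places_poly S) z = (Some z \in S).
Proof. by rewrite root_prod_XsubC mem_pmap map_id. Qed.

Lemma finite_places_poly_neq0 S : finite_places_poly S != 0.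
Proof. exact/monic_neq0/monic_prod_XsubC. Qed.

Lemma size_finite_places_poly S : (size (finite_places_poly S) <= (size S).+1)%N.
Proof. by rewrite size_prod_XsubC ltnS size_pmap count_size. Qed.

Lemma idele_open_basic_nbhd S T x m : idele_open S (basic_nbhd S T x m).
Proof.
move=> y [y_idele y_near]; split=> //; exists T, m; split.
  by move=> P PS PT; apply: (y_near P PS).2.
move=> z [z_idele z_near]; split=> // P PS.
have [zy_near zy_unit] := z_near P PS; split=> // PT n lt_nm.
have := (y_near P PS).1 PT n lt_nm; have := zy_near PT n lt_nm.
by rewrite /lsub => zy0 yx0; rewrite -(subrK (y P n) (z P n)) zy0 add0r.
Qed.

Lemma basic_nbhd_center S T x m : is_idele S x ->
  (forall P, P \notin S -> P \notin T -> lunit (x P)) -> basic_nbhd S T x m x.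
Proof.
move=> x_idele x_unit; split=> // P PS; split; last exact: x_unit.
by move=> _ n _; rewrite /lsub subrr.
Qed.

Definition one_plus_pi_pow (a : C) (N : nat) : place R -> laurent R :=
  fun P n => if (n == 0) || (P == Some a) && (n == N%:Z) then 1 else 0.

Lemma lunit_one_plus_pi_pow a N P : lunit (one_plus_pi_pow a N P).
Proof.
split; last by rewrite /one_plus_pi_pow eqxx oner_neq0.
move=> n n_lt0; rewrite /one_plus_pi_pow (negbTE (ltr0_neq0 n_lt0)) /=.
have [def_n | _] := eqVneq n N%:Z; last by rewrite andbF.
by move: n_lt0; rewrite def_n.
Qed.

Lemma is_idele_one_plus_pi_pow S a N : is_idele S (one_plus_pi_pow a N).
Proof.
split; last by exists [::] => P _ _; apply: lunit_one_plus_pi_pow.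
move=> P _; have [ord_ge0 unit0] := lunit_one_plus_pi_pow a N P.
by split; [exists 0 | exists 0].
Qed.

Section Approximation.
Variables (S : seq (place R)) (a : C) (f : Kfield R) (y : place R -> laurent R).
Let N := (size S).+2.
Hypotheses (aS : Some a \notin S)
  (y_near : basic_nbhd S [:: Some a] (one_plus_pi_pow a N) N.+1 y)
  (f_expands : forall P, P \notin S -> expands P f (y P)).

Lemma coef_near_a (n : int) : n < N.+1 ->
  y (Some a) n = one_plus_pi_pow a N (Some a) n.
Proof.
move=> lt_nN; apply/eqP; rewrite -subr_eq0; apply/eqP.
exact: ((y_near.2 _ aS).1 (mem_head _ _) n lt_nN).
Qed.

Lemma lunit_near z : Some z \notin S -> lunit (y (Some z)).
Proof.
move=> zS; have [eq_za | neq_za] := eqVneq z a.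
  have [ord_ge0 unit0] := lunit_one_plus_pi_pow a N (Some a).
  have lt0N : (0 : int) < N.+1 by rewrite ltz_nat.
  rewrite eq_za; split; last by rewrite coef_near_a.
  by move=> n n_lt0; rewrite coef_near_a ?ord_ge0 // (lt_trans n_lt0).
by apply: (y_near.2 _ zS).2; rewrite inE.
Qed.

Variables p0 q0 : {poly C}.
Hypotheses (p0_neq0 : p0 != 0) (q0_neq0 : q0 != 0) (coprime_p0q0 : coprimep p0 q0)
  (f_cross : forall p1 q1, q1 != 0 -> f = tofrac p1 / tofrac q1 ->
     p0 * q1 = p1 * q0).

Lemma dvdp_Xn_truncation_near z m : Some z \notin S -> exists k,
  'X^m %| (q0 \Po ('X + z%:P)) * \poly_(i < m + k) y (Some z) i%:Z
          - (p0 \Po ('X + z%:P)).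
Proof.
move=> zS; have [_ [p1 [q1 [q1_neq0 [def_f exp_y]]]]] := f_expands zS.
exists (size (q1 \Po ('X + z%:P))); apply: dvdp_Xn_truncation.
- by rewrite comp_poly2_eq0 ?size_XaddC.
- by rewrite -comp_polyM (f_cross q1_neq0 def_f) comp_polyM.
- exact: (lunit_near zS).1.
- exact: exp_y.
Qed.

Lemma horner_near z : Some z \notin S -> q0.[z] * y (Some z) 0 = p0.[z].
Proof.
move=> zS; have [k /dvdp_XnP/(_ 0%N isT)/eqP] := dvdp_Xn_truncation_near 1 zS.
rewrite coefB coef0M coef_poly /= -!horner_coef0 !horner_comp !hornerE.
by rewrite subr_eq0 => /eqP.
Qed.

Lemma root_near z : root p0 z || root q0 z -> Some z \in S.
Proof.
apply: contraLR => zS; have [_ y0_neq0] := lunit_near zS.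
have def_p0z := horner_near zS.
apply/norP; split; apply/negP => root_z.
  have := coprimep_root coprime_p0q0 root_z.
  by rewrite -[q0.[z]](mulfK y0_neq0) def_p0z (eqP root_z) mul0r eqxx.
have coprime_q0p0 : coprimep q0 p0 by rewrite coprimep_sym.
have := coprimep_root coprime_q0p0 root_z.
by rewrite -def_p0z (eqP root_z) mul0r eqxx.
Qed.

Lemma horner_q0_neq0 : q0.[a] != 0.
Proof.
apply: contraNneq aS => q0a_eq0; apply: root_near.
by rewrite /root q0a_eq0 eqxx orbT.
Qed.

Lemma dvdp_one_plus_Xn_near :
  'X^(N.+1) %| (q0 \Po ('X + a%:P)) * (1 + 'X^N) - (p0 \Po ('X + a%:P)).
Proof.
have [k dvd_trunc] := dvdp_Xn_truncation_near N.+1 aS.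
set T := \poly_(i < N.+1 + k) _ in dvd_trunc.
have dvd_T : 'X^(N.+1) %| T - (1 + 'X^N).
  apply/dvdp_XnP => i lt_iN.
  rewrite coefB coef_poly (leq_trans lt_iN (leq_addr _ _)).
  rewrite coef_near_a ?ltz_nat //.
  rewrite /one_plus_pi_pow eqxx coefD coef1 coefXn !eqz_nat /=.
  have [-> | _] := eqVneq i 0%N; last first.
    by case: (i == N); rewrite /= ?mulr0n ?mulr1n ?add0r ?subrr ?oppr0.
  by rewrite /N /= addr0 mulr1n subrr.
have -> : (q0 \Po ('X + a%:P)) * (1 + 'X^N) - (p0 \Po ('X + a%:P)) =
    ((q0 \Po ('X + a%:P)) * T - (p0 \Po ('X + a%:P)))
    - (q0 \Po ('X + a%:P)) * (T - (1 + 'X^N)) by ring.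
by apply: dvdp_sub dvd_trunc (dvdp_mull _ dvd_T).
Qed.

Lemma principal_idele_near_contra : False.
Proof.
set D := finite_places_poly S; set h : {poly C} := 'X + a%:P.
have roots_p0q0 z : root p0 z || root q0 z -> root D z.
  by move/root_near; rewrite root_finite_places_poly.
have [w def_w size_w] := wronskian_mul_quotient p0_neq0 q0_neq0 roots_p0q0.
have lt_wN : (size w < N)%N.
  apply: leq_ltn_trans size_w (leq_ltn_trans (leq_pred _) _).
  exact: leq_ltn_trans (size_finite_places_poly S) (ltnSn _).
have := @size_wronskian_quotient _ (D \Po h) (p0 \Po h) (q0 \Po h) (w \Po h) N.
rewrite size_comp_poly2 ?size_XaddC // comp_poly2_eq0 ?size_XaddC //.
rewrite finite_places_poly_neq0 wronskian_comp_XaddC -!comp_polyM def_w.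
rewrite -horner_coef0 horner_comp /h !hornerE horner_q0_neq0.
by move=> /(_ isT isT erefl isT dvdp_one_plus_Xn_near); rewrite leqNgt lt_wN.
Qed.
End Approximation.

Lemma principal_idele_notin_nbhd S a (f : Kfield R) y :
  Some a \notin S -> f != 0 ->
  basic_nbhd S [:: Some a] (one_plus_pi_pow a (size S).+2) (size S).+3 y ->
  ~ (forall P, P \notin S -> expands P f (y P)).
Proof.
move=> aS f_neq0 y_near f_expands.
have [_ [p [q [q_neq0 [def_f _]]]]] := f_expands _ aS.
have p_neq0 : p != 0.
  by apply: contraNneq f_neq0 => p0; rewrite def_f p0 tofrac0 mul0r.
have [p0 [q0 [coprime_p0q0 p0_neq0 q0_neq0 cross]]] :=
  coprime_fraction_repr p_neq0 q_neq0.
apply: (principal_idele_near_contra aS y_near f_expands p0_neq0 q0_neq0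
  coprime_p0q0).
by move=> p1 q1 q1_neq0 def_f1; apply: cross; rewrite // -def_f1 -def_f.
Qed.
End Ideles.

Theorem proposition4p1 (R : realType) (S : seq (place R)) :
  ~ strong_approx_Gm S.
Proof.
move=> approx.
have [a aS] : exists a, Some a \notin S.
  have /closed_nonrootP [a] := finite_places_poly_neq0 S.
  by rewrite root_finite_places_poly; exists a.
set x := one_plus_pi_pow a (size S).+2.
have [|f [f_neq0 [y [y_near f_expands]]]] :=
  approx _ (@idele_open_basic_nbhd R S [:: Some a] x (size S).+3).
  exists x; split; first exact: is_idele_one_plus_pi_pow.
  by apply: basic_nbhd_center => [|P _ _];
    [exact: is_idele_one_plus_pi_pow | exact: lunit_one_plus_pi_pow].
exact: principal_idele_notin_nbhd aS f_neq0 y_near f_expands.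
Qed.
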